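(* Let $D$ be an integral domain, $n\ge0$, $u_1,\dots,u_n\in D^*$, $R_n=D[Z_0,\dots,Z_n]$ a polynomial ring in $n+1$ variables over $D$, and $a_1,\dots,a_n,b_1,\dots,b_n$ positive integers with $\gcd(a_i,b_1\cdots b_i)=1$ for each $i\in\{1,\dots,n\}$. Then $$I_n:=\big(u_1Z_1^{a_1}+Z_0^{b_1},\dots,u_nZ_n^{a_n}+Z_{n-1}^{b_n}\big)$$ is a prime ideal of $R_n$ and $Z_n\notin I_n$. *)

From HB Require Import structures.
From mathcomp Require Import all_boot all_order all_algebra.
From mathcomp Require Import mpoly.
Set Implicit Arguments. Unset Strict Implicit. Unset Printing Implicit Defensive.
Import GRing.Theory.
Local Open Scope ring_scope.

Definition in_ideal (R : comRingType) (m : nat) (g : 'I_m -> R) (x : R) : Prop :=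
  exists c : 'I_m -> R, x = \sum_(i < m) c i * g i.

Definition prime_ideal_gen (R : comRingType) (m : nat) (g : 'I_m -> R) : Prop :=
  ~ in_ideal g 1 /\
  forall x y : R, in_ideal g (x * y) -> in_ideal g x \/ in_ideal g y.

(* The generators of I_n in D[Z_0,...,Z_n]; index i : 'I_n stands for the
   paper's index i+1, i.e. generator u_{i+1} Z_{i+1}^{a_{i+1}} + Z_i^{b_{i+1}}. *)
Definition In_gens (D : comRingType) (n : nat) (u : 'I_n -> D)
  (a b : 'I_n -> nat) (i : 'I_n) : {mpoly D[n.+1]} :=
  u i *: 'X_(lift ord0 i) ^+ a i + 'X_(widen_ord (leqnSn n) i) ^+ b i.

(* Pick units c_0, ..., c_n of D with u_i c_i^(a_i) + c_(i-1)^(b_i) = 0 and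
   set w_j = b_1 ... b_j a_(j+1) ... a_n, so that w_(i-1) b_i = w_i a_i; the
   D-algebra map phi : D[Z_0, ..., Z_n] -> D[T], Z_j |-> c_j T^(w_j), then
   kills every generator of I_n.  Conversely, modulo I_n every polynomial is
   congruent to one in which each Z_(i-1) occurs with degree < b_i, and by the
   coprimality hypotheses distinct such monomials have distinct T-degrees
   under phi (read the exponents off the T-degree modulo b_1, then b_2, ...),
   so phi is injective on these reduced polynomials.  Hence I_n = ker phi,
   which is prime as D[T] is a domain, and Z_n is not in I_n as
   phi(Z_n) = c_n T^(w_n) <> 0. *)

From HB Require Import structures.
From mathcomp Require Import all_boot all_order all_algebra.
From mathcomp Require Import mpoly.
From mathcomp Require Import zify ring.
Set Implicit Arguments. Unset Strict Implicit. Unset Printing Implicit Defensive.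
Import GRing.Theory.

Definition weight (a b : nat -> nat) (k j : nat) : nat :=
  \prod_(0 <= i < j) b i * \prod_(j <= i < k) a i.

Lemma weight_mulb a b k i : i < k ->
  weight a b k i * b i = weight a b k i.+1 * a i.
Proof.
move=> lt_ik; rewrite /weight big_nat_recr //= (big_ltn lt_ik).
set B := \prod_(0 <= j < i) b j; set A := \prod_(i.+1 <= j < k) a j; lia.
Qed.

Lemma weight0 a b k : weight a b k 0 = \prod_(0 <= i < k) a i.
Proof. by rewrite /weight big_geq // mul1n. Qed.

Lemma weightSS a b k j :
  weight a b k.+1 j.+1 = b 0 * weight (fun i => a i.+1) (fun i => b i.+1) k j.
Proof. by rewrite /weight big_nat_recl // big_add1 -mulnA. Qed.

Lemma eqn_modMr_coprime A d x y : coprime A d ->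
  (x * A == y * A %[mod d]) = (x == y %[mod d]).
Proof.
move=> cop; wlog le_xy : x y / x <= y.
  by move=> H; case: (leqP x y) => [/H //|/ltnW /H E]; rewrite eq_sym E eq_sym.
rewrite eq_sym [RHS]eq_sym !eqn_mod_dvd ?leq_mul2r ?le_xy ?orbT //.
by rewrite -mulnBl Gauss_dvdl // coprime_sym.
Qed.

Lemma coprime_prod_nat a (F : nat -> nat) m k :
  (forall i, m <= i < k -> coprime a (F i)) -> coprime a (\prod_(m <= i < k) F i).
Proof.
move=> cop; rewrite big_seq_cond; apply: (big_ind (coprime a)) => [|x y|i].
- exact: coprimen1.
- by rewrite coprimeMr => -> ->.
- by rewrite andbT mem_index_iota => /cop.
Qed.

Lemma weighted_sum_inj n a b (e e' : nat -> nat) :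
  (forall i, i < n -> coprime (a i) (\prod_(0 <= j < i.+1) b j)) ->
  (forall i, i < n -> e i < b i) ->
  (forall i, i < n -> e' i < b i) ->
  \sum_(0 <= j < n.+1) e j * weight a b n j =
    \sum_(0 <= j < n.+1) e' j * weight a b n j ->
  forall j, j <= n -> e j = e' j.
Proof.
elim: n a b e e' => [|n IHn] a b e e' cop lt_e lt_e' eq_sum j.
  rewrite leqn0 => /eqP ->; move: eq_sum.
  by rewrite !big_nat1 weight0 big_geq // !muln1.
have shift (f : nat -> nat) : \sum_(0 <= j < n.+2) f j * weight a b n.+1 j =
    (\sum_(0 <= j < n.+1) f j.+1 * weight (fun i => a i.+1) (fun i => b i.+1) n j) * b 0
    + f 0 * \prod_(0 <= i < n.+1) a i.
  rewrite big_nat_recl // weight0 big_distrl addnC; congr (_ + _).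
  by apply: eq_bigr => i _; rewrite weightSS mulnCA mulnC.
have cop0 : coprime (\prod_(0 <= i < n.+1) a i) (b 0).
  rewrite coprime_sym; apply: coprime_prod_nat => i /andP[_ lt_in].
  by have := cop i lt_in; rewrite big_nat_recl // coprimeMr coprime_sym => /andP[].
(* Modulo b 0 only the j = 0 term survives, with a weight coprime to b 0. *)
have eq_e0 : e 0 = e' 0.
  have := congr1 (modn^~ (b 0)) eq_sum; rewrite !shift !modnMDl => /eqP.
  by rewrite eqn_modMr_coprime // !modn_small ?lt_e ?lt_e' // => /eqP.
case: j => [_|j le_jn]; first exact: eq_e0.
apply: (IHn (fun i => a i.+1) (fun i => b i.+1) (fun i => e i.+1) (fun i => e' i.+1))
  => // [i lt_in|i lt_in|i lt_in|].
- by have := cop i.+1 lt_in; rewrite big_nat_recl // coprimeMr => /andP[].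
- exact: lt_e.
- exact: lt_e'.
- have b0_gt0 : 0 < b 0 by apply: leq_ltn_trans (lt_e 0 _).
  move: eq_sum; rewrite !shift eq_e0 => /addIn /eqP.
  by rewrite eqn_mul2r eqn0Ngt b0_gt0 => /eqP.
Qed.

Local Open Scope ring_scope.

Lemma exists_unit_common_zero (R : comUnitRingType) (u : nat -> R) (a b : nat -> nat) k :
  (forall i, (i < k)%N -> u i \is a GRing.unit) ->
  (forall i, (i < k)%N -> (0 < a i)%N) ->
  (forall i, (i < k)%N -> coprime (a i) (\prod_(0 <= j < i.+1) b j)) ->
  exists2 c : nat -> R, (forall j, c j \is a GRing.unit) &
    forall i, (i < k)%N -> u i * c i.+1 ^+ a i + c i ^+ b i = 0.
Proof.
elim: k => [|k IHk] u_unit a_gt0 cop.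
  by exists (fun=> 1) => // j; rewrite unitr1.
have [c c_unit c_zero] := IHk (fun i lt_ik => u_unit i (ltnW lt_ik))
  (fun i lt_ik => a_gt0 i (ltnW lt_ik)) (fun i lt_ik => cop i (ltnW lt_ik)).
have [alpha [beta bezout]] :
    exists alpha beta, (alpha * a k = beta * \prod_(0 <= j < k.+1) b j + 1)%N.
  have [beta _] := Bezoutl (\prod_(0 <= j < k.+1) b j) (a_gt0 k (ltnSn k)).
  rewrite (eqP (cop k (ltnSn k))) => /dvdnP[alpha E].
  by exists alpha, beta; rewrite -E addnC.
pose y := - (c k ^+ b k / u k).
have y_unit : y \is a GRing.unit by rewrite unitrN unitrM unitrX ?unitrV ?c_unit ?u_unit.
have y_zero : u k * y + c k ^+ b k = 0.
  by rewrite /y mulrN mulrCA mulrV ?u_unit // mulr1 addNr.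
(* Rescaling c j by lambda ^+ weight a b k j preserves the first k equations
   (weight_mulb); Bezout's identity lets lambda := y ^+ beta together with
   c k.+1 := y ^+ alpha solve the last one. *)
pose lambda := y ^+ beta.
exists (fun j => if (j <= k)%N then lambda ^+ weight a b k j * c j else y ^+ alpha).
  by move=> j; case: ifP => _; rewrite ?unitrM ?unitrX ?c_unit.
move=> i; rewrite ltnS leq_eqVlt => /predU1P[->|lt_ik].
  have weight_kk : (weight a b k k * b k = \prod_(0 <= j < k.+1) b j)%N.
    by rewrite /weight (big_geq (leqnn k)) muln1 big_nat_recr.
  rewrite eqxx ltnn /= exprMn -!exprM weight_kk bezout exprD expr1.
  by rewrite mulrCA -mulrDr y_zero mulr0.
rewrite lt_ik orbT !exprMn -!exprM mulnC -weight_mulb // mulnC.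
by rewrite mulrCA -mulrDr c_zero ?mulr0 // ltnW.
Qed.

Section IdealGen.
Variables (R : comRingType) (m : nat) (g : 'I_m -> R).

Lemma in_ideal0 : in_ideal g 0.
Proof. by exists (fun=> 0); rewrite big1 // => i _; rewrite mul0r. Qed.

Lemma in_idealD x y : in_ideal g x -> in_ideal g y -> in_ideal g (x + y).
Proof.
move=> [c ->] [d ->]; exists (fun i => c i + d i).
by rewrite -big_split; apply: eq_bigr => i _; rewrite mulrDl.
Qed.

Lemma in_idealMl y x : in_ideal g x -> in_ideal g (y * x).
Proof.
move=> [c ->]; exists (fun i => y * c i).
by rewrite mulr_sumr; apply: eq_bigr => i _; rewrite mulrA.
Qed.

Lemma in_ideal_gen i : in_ideal g (g i).
Proof.
exists (fun j => (j == i)%:R); rewrite (bigD1 i) //= eqxx mul1r big1 ?addr0 //.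
by move=> j /negbTE ->; rewrite mul0r.
Qed.

Lemma prime_ideal_gen_kernel (S : idomainType) (f : {rmorphism R -> S}) :
  (forall x, in_ideal g x <-> f x = 0) -> prime_ideal_gen g.
Proof.
move=> kerf; split=> [/kerf/eqP|x y /kerf/eqP]; first by rewrite rmorph1 oner_eq0.
by rewrite rmorphM mulf_eq0 => /orP[] /eqP /kerf; [left|right].
Qed.

End IdealGen.

Section Reduction.
Variables (R : comRingType) (n : nat) (u : 'I_n -> R) (a b : 'I_n -> nat).
Hypothesis b_gt0 : forall i, (0 < b i)%N.

Local Notation g := (In_gens u a b).
Local Notation widen := (widen_ord (leqnSn n)).

Definition reduced_mnm (m : 'X_{1..n.+1}) : Prop := forall i : 'I_n, (m (widen i) < b i)%N.

Definition reduced (p : {mpoly R[n.+1]}) : Prop := {in msupp p, forall m, reduced_mnm m}.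

(* With these weights Z_i^(b_i) is heavier than Z_(i+1)^(a_i), so every
   rewriting step Z_i^(b_i) ~> - u_i Z_(i+1)^(a_i) lowers the measure. *)
Definition descent_weight (j : 'I_n.+1) : nat := (\prod_(i < n | j <= i) (a i).+1)%N.

Definition descent_measure (m : 'X_{1..n.+1}) : nat :=
  (\sum_(j < n.+1) m j * descent_weight j)%N.

Lemma descent_weight_widen i :
  descent_weight (widen i) = ((a i).+1 * descent_weight (lift ord0 i))%N.
Proof.
rewrite /descent_weight (bigD1 i) //=; congr (_ * _)%N.
by apply: eq_bigl => k; rewrite /bump leq0n add1n ltn_neqAle andbC eq_sym.
Qed.

Lemma descent_measureD m m' :
  descent_measure (m + m')%MM = (descent_measure m + descent_measure m')%N.
Proof. by rewrite -big_split; apply: eq_bigr => j _; rewrite mnmDE mulnDl. Qed.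

Lemma descent_measureU j k : descent_measure (U_(j) *+ k)%MM = (k * descent_weight j)%N.
Proof.
rewrite /descent_measure (bigD1 j) //= big1 => [|l /negbTE]; rewrite mulmnE mnm1E.
  by rewrite eqxx addn0 mul1n.
by rewrite eq_sym => ->.
Qed.

Lemma mpolyX_reduce_step (m : 'X_{1..n.+1}) i : (b i <= m (widen i))%N ->
  exists2 m', (descent_measure m' < descent_measure m)%N &
              in_ideal g ('X_[m] + u i *: 'X_[m']).
Proof.
move=> le_bm; set m1 := (m - U_(widen i) *+ b i)%MM.
have def_m : m = (m1 + U_(widen i) *+ b i)%MM.
  rewrite submK //; apply/mnm_lepP => j; rewrite mulmnE mnm1E.
  by case: eqP => [<-|_]; rewrite ?mul1n ?mul0n.
exists (m1 + U_(lift ord0 i) *+ a i)%MM.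
  rewrite [in X in (_ < X)%N]def_m !descent_measureD !descent_measureU ltn_add2l.
  by rewrite descent_weight_widen mulnA ltn_pmul2r ?prodn_gt0 // leq_pmull.
have -> : 'X_[m] + u i *: 'X_[m1 + U_(lift ord0 i) *+ a i] = 'X_[m1] * g i.
  by rewrite def_m /In_gens !mpolyXD -!mpolyXn -!mul_mpolyC; ring.
exact/in_idealMl/in_ideal_gen.
Qed.

Lemma mpolyX_reduce (m : 'X_{1..n.+1}) : exists2 r, reduced r & in_ideal g ('X_[m] - r).
Proof.
elim: {m}(descent_measure m).+1 {-2}m (ltnSn (descent_measure m)) => // N IHN m lt_mN.
case: (boolP [forall i, m (widen i) < b i]%N) => [/forallP red_m|].
  exists 'X_[m]; last by rewrite subrr; exact: in_ideal0.
  by move=> m'; rewrite msuppX inE => /eqP -> i; apply: red_m.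
rewrite negb_forall => /existsP[i]; rewrite -leqNgt => /mpolyX_reduce_step[m' lt_m' Im'].
have [r red_r Ir] := IHN m' (leq_trans lt_m' lt_mN).
exists (- u i *: r) => [k /msuppZ_le /red_r //|].
have -> : 'X_[m] - (- u i *: r) = 'X_[m] + u i *: 'X_[m'] + (- u i)%:MP * ('X_[m'] - r).
  by rewrite -!mul_mpolyC rmorphN; ring.
exact: in_idealD Im' (in_idealMl _ Ir).
Qed.

Lemma mpoly_reduce p : exists2 r, reduced r & in_ideal g (p - r).
Proof.
elim/mpolyind: p => [|c m p _ _ [r red_r Ir]].
  by exists 0 => [m|]; rewrite ?msupp0 // subrr; exact: in_ideal0.
have [rm red_rm Irm] := mpolyX_reduce m.
exists (c *: rm + r) => [k /msuppD_le|].
  by rewrite mem_cat => /orP[/msuppZ_le /red_rm|/red_r].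
have -> : c *: 'X_[m] + p - (c *: rm + r) = c%:MP * ('X_[m] - rm) + (p - r).
  by rewrite -!mul_mpolyC; ring.
exact: in_idealD (in_idealMl _ Irm) Ir.
Qed.

End Reduction.

Definition ord_ext (T : Type) (n : nat) (x0 : T) (f : 'I_n -> T) (k : nat) : T :=
  oapp f x0 (insub k).

Lemma ord_extE (T : Type) (n : nat) (x0 : T) (f : 'I_n -> T) (i : 'I_n) :
  ord_ext x0 f i = f i.
Proof. by rewrite /ord_ext valK. Qed.

Section WeightMap.
Variables (R : comUnitRingType) (n : nat) (u : 'I_n -> R) (a b : 'I_n -> nat).
Hypothesis b_gt0 : forall i, (0 < b i)%N.
Hypothesis cop : forall i : 'I_n, coprime (a i) (\prod_(j < n | (j <= i)%N) b j).

Local Notation g := (In_gens u a b).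
Local Notation a_ := (ord_ext 1%N a).
Local Notation b_ := (ord_ext 1%N b).
Local Notation wt := (weight a_ b_ n).

Lemma coprime_ord_ext i : (i < n)%N -> coprime (a_ i) (\prod_(0 <= j < i.+1) b_ j).
Proof.
move=> lt_in; have := cop (Ordinal lt_in); rewrite -(ord_extE 1%N a) /=.
rewrite (big_nat_widen _ _ _ _ _ lt_in) big_mkord.
by rewrite (eq_bigr (fun j : 'I_n => b_ j)) // => j _; rewrite ord_extE.
Qed.

Lemma exists_unit_zero_gens :
  (forall i, u i \is a GRing.unit) -> (forall i, (0 < a i)%N) ->
  exists2 c : nat -> R, (forall j, c j \is a GRing.unit) &
    forall i : 'I_n, u i * c i.+1 ^+ a i + c i ^+ b i = 0.
Proof.
move=> u_unit a_gt0.
have [|i lt_in|c c_unit c_zero] :=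
  @exists_unit_common_zero R (ord_ext 1 u) a_ b_ n _ _ coprime_ord_ext.
- by move=> i lt_in; rewrite -[i]/(val (Ordinal lt_in)) ord_extE.
- by rewrite -[i]/(val (Ordinal lt_in)) ord_extE.
by exists c => // i; have := c_zero i (ltn_ord i); rewrite !ord_extE.
Qed.

Variable c : nat -> R.
Hypothesis c_unit : forall j, c j \is a GRing.unit.
Hypothesis c_zero : forall i : 'I_n, u i * c i.+1 ^+ a i + c i ^+ b i = 0.

Definition weight_image (j : 'I_n.+1) : {poly R} := (c j)%:P * 'X^(wt j).

Local Notation phi := (mmap (@polyC R) weight_image).

Definition mnm_coef (m : 'X_{1..n.+1}) : R := \prod_(j < n.+1) c j ^+ m j.
Definition mnm_weight (m : 'X_{1..n.+1}) : nat := (\sum_(j < n.+1) m j * wt j)%N.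

Lemma mmap1_weight_image m : mmap1 weight_image m = (mnm_coef m)%:P * 'X^(mnm_weight m).
Proof.
rewrite /mmap1 /weight_image.
under eq_bigr do rewrite exprMn -rmorphXn /= -exprM.
rewrite big_split /= -rmorph_prod prodrXr /mnm_coef /mnm_weight.
by congr (_ * 'X^_); apply: eq_bigr => j _; rewrite mulnC.
Qed.

Lemma weight_image_neq0 j : weight_image j != 0.
Proof.
apply/eqP => /(congr1 (coefp (wt j))); rewrite /= coefCM coefXn eqxx mulr1 coef0 => cj0.
by have := c_unit j; rewrite cj0 unitr0.
Qed.

Lemma weight_map_gen i : phi (g i) = 0.
Proof.
rewrite /In_gens rmorphD /= mmapZ !rmorphXn /= !mmapX !mmap1U /weight_image lift0 /=.
rewrite !exprMn -!rmorphXn -!exprM -(ord_extE 1%N a) -(ord_extE 1%N b) /=.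
rewrite -weight_mulb // mulrA -rmorphM -mulrDl -rmorphD !ord_extE c_zero.
by rewrite rmorph0 mul0r.
Qed.

Lemma weight_map_ideal p : in_ideal g p -> phi p = 0.
Proof.
by move=> [d ->]; rewrite rmorph_sum big1 // => i _; rewrite rmorphM /= weight_map_gen mulr0.
Qed.

Lemma mnm_weight_inj m m' : reduced_mnm b m -> reduced_mnm b m' ->
  mnm_weight m = mnm_weight m' -> m = m'.
Proof.
move=> red_m red_m' eq_w; apply/mnmP => j; rewrite -[j]inord_val.
have reduced_ext (k : 'X_{1..n.+1}) : reduced_mnm b k ->
    forall i, (i < n)%N -> (k (inord i) < b_ i)%N.
  move=> red_k i lt_in; have := red_k (Ordinal lt_in); rewrite -(ord_extE 1%N b) /=.
  by congr (_ < _)%N; congr (k _); apply: val_inj; rewrite /= inordK // ltnS ltnW.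
have sum_inord (k : 'X_{1..n.+1}) :
    (\sum_(0 <= i < n.+1) k (inord i) * wt i)%N = mnm_weight k.
  by rewrite big_mkord; apply: eq_bigr => i _; rewrite inord_val.
apply: (@weighted_sum_inj n a_ b_ (fun i => m (inord i)) (fun i => m' (inord i))) => //.
- exact: coprime_ord_ext.
- exact: reduced_ext.
- exact: reduced_ext.
- by rewrite !sum_inord.
- by rewrite -ltnS.
Qed.

Lemma mnm_coef_unit m : mnm_coef m \is a GRing.unit.
Proof.
apply: (big_ind (fun x => x \is a GRing.unit)) => [|x y ux uy|j _].
- exact: unitr1.
- by rewrite unitrM ux uy.
- by rewrite unitrX.
Qed.

Lemma coef_weight_map r m : reduced b r -> m \in msupp r ->
  (phi r)`_(mnm_weight m) = r@_m * mnm_coef m.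
Proof.
move=> red_r r_m; rewrite /mmap coef_sum (bigD1_seq m) ?msupp_uniq //=.
rewrite mmap1_weight_image !coefCM coefXn eqxx mulr1 big1_seq ?addr0 // => k /andP[neq_km r_k].
rewrite mmap1_weight_image !coefCM coefXn; case: eqP => [eq_w|]; last by rewrite !mulr0.
by move: neq_km; rewrite (mnm_weight_inj (red_r _ r_k) (red_r _ r_m) (esym eq_w)) eqxx.
Qed.

Lemma weight_map_reduced_eq0 r : reduced b r -> phi r = 0 -> r = 0.
Proof.
move=> red_r phi_r; apply/mpolyP => m; rewrite mcoeff0.
have [r_m|/memN_msupp_eq0 //] := boolP (m \in msupp r).
have := coef_weight_map red_r r_m; rewrite phi_r coef0.
by move=> /(congr1 (fun x => x / mnm_coef m)); rewrite mulrK ?mnm_coef_unit // mul0r => <-.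
Qed.

Lemma weight_map_kernel p : in_ideal g p <-> phi p = 0.
Proof.
split=> [|phi_p]; first exact: weight_map_ideal.
have [r red_r Ir] := mpoly_reduce u a b_gt0 p.
suff r0 : r = 0 by rewrite r0 subr0 in Ir.
apply: weight_map_reduced_eq0 => //.
move: (weight_map_ideal Ir); rewrite rmorphB /= phi_p sub0r => /eqP.
by rewrite oppr_eq0 => /eqP.
Qed.

End WeightMap.

Unset Implicit Arguments.

Theorem lemma4p1 (D : idomainType) (n : nat) (u : 'I_n -> D)
  (a b : 'I_n -> nat)
  (hu : forall i, u i \is a GRing.unit)
  (ha : forall i, (0 < a i)%N) (hb : forall i, (0 < b i)%N)
  (hcop : forall i : 'I_n, coprime (a i) (\prod_(j < n | (j <= i)%N) b j)) :
  prime_ideal_gen (In_gens u a b) /\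
  ~ in_ideal (In_gens u a b) ('X_(@ord_max n)).
Proof.
have [c c_unit c_zero] := exists_unit_zero_gens hcop hu ha.
have kerg := weight_map_kernel hb hcop c_unit c_zero.
split; first exact: prime_ideal_gen_kernel kerg.
by move/kerg; rewrite mmapX mmap1U; apply/eqP; apply: weight_image_neq0.
Qed.
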